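(* Let $p\ge 1$ and $c>0$ be constants, let $a>0$, and let $x_a:[0,\infty)\to\mathbb{R}$ be the unique solution of $$x'''+c\,x^p\, x''=0,\qquad x(0)=0=x'(0),\quad x''(0)=a,$$ and let $h(a):=\lim_{t\to\infty}x_a'(t)$ (which exists and is finite and positive). Then the limit $\mu(a):=\lim_{t\to\infty}\big(h(a)t-x_a(t)\big)$ exists, is finite and is positive; that is, the graph of $x_a$ has the slant asymptote $h(a)t-\mu(a)$. Moreover, for all $t\ge 0$, $$\max\big(0,\,h(a)t-\mu(a)\big)\le x_a(t)\le h(a)t.$$ *)

From HB Require Import structures.
From mathcomp Require Import all_boot all_order all_algebra.
From mathcomp Require Import all_classical all_reals all_analysis.
Set Implicit Arguments. Unset Strict Implicit. Unset Printing Implicit Defensive.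

From HB Require Import structures.
From mathcomp Require Import all_boot all_order all_algebra.
From mathcomp Require Import all_classical all_reals all_analysis.
From mathcomp Require Import ring lra.
Import Order.TTheory GRing.Theory Num.Theory.
Import numFieldNormedType.Exports.
Local Open Scope classical_set_scope.
Local Open Scope ring_scope.

(* x'' solves the linear equation y' = -c x^p y, so y^2 e^(2Kt) is
   nondecreasing on every compact interval and x'' never vanishes: x'' > 0.
   Hence x' and x increase, and x >= 1 after some time T.  From then on
   E = x' + x''/c satisfies E' = x'' (1 - x^p) <= 0, so x' <= E(T) increases
   to a finite limit h <= E.  Finally g(t) = h t - x(t) increases
   (g' = h - x' > 0) while g - x'/c does not (its derivative is h - E <= 0),
   so g is bounded and increases to a limit mu > g(0) = 0; the inequalities
   0 <= g <= mu are the claimed bounds on x. *)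

Section DeriveSign.
Context {R : realType}.
Implicit Types (f df : R -> R) (a b : R).

Lemma derive_ge0_le f df a b : a <= b -> {within `[a, b], continuous f} ->
  {in `]a, b[, forall t : R, is_derive t 1 f (df t)} ->
  {in `]a, b[, forall t : R, 0 <= df t} -> f a <= f b.
Proof.
move=> ab cf fd df_ge0; apply: (ger0_derive1_ndecr _ _ cf) => // t tab.
- by have [] := fd t tab.
- by have := fd t tab; rewrite derive1E => ?; rewrite derive_val; exact: df_ge0.
Qed.

Lemma derive_gt0_lt f df a b : a < b -> {within `[a, b], continuous f} ->
  {in `]a, b[, forall t : R, is_derive t 1 f (df t)} ->
  {in `]a, b[, forall t : R, 0 < df t} -> f a < f b.
Proof.
move=> ab cf fd df_gt0; have [t tab fab] := MVT ab fd cf.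
by rewrite -subr_gt0 fab mulr_gt0 ?df_gt0 // subr_gt0.
Qed.

Lemma itvcy_continuous_itvcc {f c a} b : c <= a ->
  {within `[c, +oo[, continuous f} -> {within `[a, b], continuous f}.
Proof.
by move=> ca; apply: continuous_subspaceW; apply: subset_itv; rewrite bnd_simp.
Qed.

Section HalfLine.
Context {f df : R -> R}.
Hypothesis cf : {within `[0, +oo[, continuous f}.
Hypothesis fd : forall t : R, 0 < t -> is_derive t 1 f (df t).

Let fd_itv {a} b : 0 <= a -> {in `]a, b[, forall t : R, is_derive t 1 f (df t)}.
Proof. by move=> a0 t; rewrite in_itv /= => /andP[ta _]; apply: fd; lra. Qed.

Lemma halfline_derive_ge0_le a b : 0 <= a -> a <= b ->
  {in `]a, b[, forall t : R, 0 <= df t} -> f a <= f b.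
Proof.
move=> a0 ab.
exact: derive_ge0_le ab (itvcy_continuous_itvcc b a0 cf) (fd_itv b a0).
Qed.

Lemma halfline_derive_gt0_lt a b : 0 <= a -> a < b ->
  {in `]a, b[, forall t : R, 0 < df t} -> f a < f b.
Proof.
move=> a0 ab.
exact: derive_gt0_lt ab (itvcy_continuous_itvcc b a0 cf) (fd_itv b a0).
Qed.

Lemma halfline_derive_le0_ge a b : 0 <= a -> a <= b ->
  {in `]a, b[, forall t : R, df t <= 0} -> f b <= f a.
Proof.
move=> a0 ab df_le0; rewrite -lerN2.
have := @derive_ge0_le (fun t => - f t) (fun t => - df t) a b ab; apply.
- by move=> t; apply: cvgN; exact: (itvcy_continuous_itvcc b a0 cf t).
- by move=> t /(fd_itv b a0) ?; exact: is_deriveN.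
- by move=> t /df_le0; rewrite oppr_ge0.
Qed.

End HalfLine.
End DeriveSign.

Section Limits.
Context {R : realType}.
Implicit Types (f : R -> R).

Lemma nondecreasing_bounded_cvg {f} {B : R} :
  (forall s t, 0 <= s -> s <= t -> f s <= f t) ->
  (forall t, 0 <= t -> f t <= B) -> exists l : R, f t @[t --> +oo] --> l.
Proof.
move=> f_nd f_ub; pose g t := f (Num.max 0 t) : R.
have max_ge0 (t : R) : 0 <= Num.max 0 t by rewrite le_max lexx.
have g_nd : {homo g : s t / s <= t}.
  by move=> s t st; apply: f_nd => //; rewrite ge_max max_ge0 le_max st orbT.
have g_ub : has_ubound (range g) by exists B => _ [t _ <-]; exact: f_ub.
exists (sup (range g)); apply: cvg_trans (nondecreasing_cvgr g_nd g_ub).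
apply: near_eq_cvg; exists 0; split; first exact: real0.
by move=> t /= t0; rewrite /g max_r // ltW.
Qed.

Lemma nondecreasing_cvg_le {f} {l : R} :
  (forall s t, 0 <= s -> s <= t -> f s <= f t) ->
  f t @[t --> +oo] --> l -> forall t, 0 <= t -> f t <= l.
Proof.
move=> f_nd fl t t0; apply: (cvgr_to_ge fl).
exists t; split; first exact: num_real.
by move=> s ts; apply: f_nd => //; exact: ltW.
Qed.

End Limits.

Lemma sqr_le_sqr_expR_linear_ode {R : realType} (y q : R -> R) (K b : R) :
  0 <= b -> {within `[0, b], continuous y} ->
  {in `]0, b[, forall t : R, is_derive t 1 y (q t * y t)} ->
  {in `]0, b[, forall t : R, - K <= q t} ->
  y 0 ^+ 2 <= y b ^+ 2 * expR (2 * K * b).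
Proof.
move=> b0 cy yd qK.
pose F t := y t ^+ 2 * expR (2 * K * t).
have -> : y 0 ^+ 2 = F 0 by rewrite /F mulr0 expR0 mulr1.
apply: (@derive_ge0_le _ F (fun t => F t * (2 * (K + q t)))) => //.
- move=> t; apply: cvgM; first by apply: cvgM; exact: cy.
  apply: continuous_subspaceT => s.
  apply: continuous_comp; last exact: continuous_expR.
  by apply: cvgM; [exact: cvg_cst | exact: cvg_id].
- move=> t /yd ?; rewrite /F; apply: is_derive_eq.
  by rewrite !scaler1 /GRing.scale /=; ring.
- move=> t /qK qtK; apply: mulr_ge0; last by rewrite mulr_ge0 // -lerBlDl sub0r.
  by rewrite mulr_ge0 ?sqr_ge0 ?expR_ge0.
Qed.

Lemma powR_bounded_itv {R : realType} {f : R -> R} {p a b : R} :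
  0 <= p -> a <= b -> {within `[a, b], continuous f} ->
  exists M, forall t, t \in `[a, b] -> f t `^ p <= M.
Proof.
move=> p0 ab cf; have [m mab f_le] := EVT_max ab cf.
exists (1 + f m `^ p) => t tab; have fm_ge0 := powR_ge0 (f m) p.
case: (ltgtP (f t) 0) => [ft_lt0|ft_gt0|->].
- by rewrite lt0_powR1 // lerDl.
- have fmt := f_le t tab.
  rewrite -[X in X <= _]add0r lerD // ge0_ler_powR // nnegrE ltW //.
  exact: lt_le_trans fmt.
- have [->|p_neq0] := eqVneq p 0; first by rewrite powRr0 lerDl powR_ge0.
  by rewrite powR0 // addr_ge0.
Qed.

Section Solution.
Context {R : realType} {p c a : R} {x x1 x2 : R -> R}.
Hypotheses (hp : 1 <= p) (hc : 0 < c) (ha : 0 < a).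
Hypothesis dx : forall t : R, 0 < t -> is_derive t 1 x (x1 t).
Hypothesis dx1 : forall t : R, 0 < t -> is_derive t 1 x1 (x2 t).
Hypothesis dx2 :
  forall t : R, 0 < t -> is_derive t 1 x2 (- c * (x t `^ p) * x2 t).
Hypotheses (cx : {within `[0, +oo[, continuous x})
  (cx1 : {within `[0, +oo[, continuous x1})
  (cx2 : {within `[0, +oo[, continuous x2}).
Hypotheses (x0 : x 0 = 0) (x10 : x1 0 = 0) (x20 : x2 0 = a).

Lemma x2_gt0 t : 0 <= t -> 0 < x2 t.
Proof.
move=> t0; rewrite ltNge; apply/negP => x2t_le0.
have [t1 t1t x2t1] : exists2 t1, t1 \in `[0, t] & x2 t1 = 0.
  have := IVT t0 (itvcy_continuous_itvcc t (lexx (0 : R)) cx2); apply.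
  by rewrite x20 ge_min le_max x2t_le0 orbT (ltW ha).
have [M xpM] := powR_bounded_itv (le_trans ler01 hp) t0
  (itvcy_continuous_itvcc t (lexx (0 : R)) cx).
move: t1t; rewrite in_itv /= => /andP[t1_ge0 t1t].
have : x2 0 ^+ 2 <= x2 t1 ^+ 2 * expR (2 * (c * M) * t1).
  apply: (@sqr_le_sqr_expR_linear_ode _ _ (fun s => - c * x s `^ p)) t1_ge0
    (itvcy_continuous_itvcc t1 (lexx (0 : R)) cx2) _ _.
  - by move=> s; rewrite in_itv /= => /andP[s0 _]; exact: dx2.
  - move=> s; rewrite in_itv /= => /andP[s0 s1].
    rewrite mulNr lerN2 ler_wpM2l ?(ltW hc) // xpM // in_itv /=.
    apply/andP; lra.
by rewrite x20 x2t1 expr0n mul0r leNgt exprn_gt0.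
Qed.

Lemma x1_lt s t : 0 <= s -> s < t -> x1 s < x1 t.
Proof.
move=> s0 st; apply: (halfline_derive_gt0_lt cx1 dx1) => // u.
by rewrite in_itv /= => /andP[su _]; apply: x2_gt0; lra.
Qed.

Lemma x1_le s t : 0 <= s -> s <= t -> x1 s <= x1 t.
Proof.
move=> s0 st; apply: (halfline_derive_ge0_le cx1 dx1) => // u.
by rewrite in_itv /= => /andP[su _]; apply/ltW/x2_gt0; lra.
Qed.

Lemma x1_gt0 t : 0 < t -> 0 < x1 t.
Proof. by move=> t0; rewrite -x10; exact: x1_lt. Qed.

Lemma x_le s t : 0 <= s -> s <= t -> x s <= x t.
Proof.
move=> s0 st; apply: (halfline_derive_ge0_le cx dx) => // u.
by rewrite in_itv /= => /andP[su _]; apply/ltW/x1_gt0; lra.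
Qed.

Lemma x_ge0 t : 0 <= t -> 0 <= x t.
Proof. by move=> t0; rewrite -x0; exact: x_le. Qed.

(* Since x1 increases, the mean value theorem on [1, T] gives
   x T >= x 1 + x1 1 * (T - 1) = x 1 + 1. *)
Let T := 1 + (x1 1)^-1.

Let T_gt1 : 1 < T.
Proof. by rewrite ltrDl invr_gt0 x1_gt0. Qed.

Let T_ge0 : 0 <= T.
Proof. exact/ltW/(lt_trans ltr01 T_gt1). Qed.

Lemma x_ge1 t : T <= t -> 1 <= x t.
Proof.
move=> Tt; apply: le_trans (x_le _ _ T_ge0 Tt).
have x1_1_gt0 := x1_gt0 _ ltr01.
have dx_1T : {in `]1, T[, forall s : R, is_derive s 1 x (x1 s)}.
  by move=> s; rewrite in_itv /= => /andP[s1 _]; apply: dx; lra.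
have [s] := MVT T_gt1 dx_1T (itvcy_continuous_itvcc T ler01 cx).
rewrite in_itv /= => /andP[s1 _] /eqP; rewrite subr_eq => /eqP ->.
rewrite /T addrAC subrr add0r ler_wpDr ?x_ge0 // ler_pdivlMr // mul1r.
by apply: x1_le; lra.
Qed.

Let E t := x1 t + c^-1 * x2 t.

Lemma E_le s t : T <= s -> s <= t -> E t <= E s.
Proof.
move=> Ts st; have s0 : 0 <= s := le_trans T_ge0 Ts.
have cE : {within `[0, +oo[, continuous E}.
  move=> u; apply: cvgD; first exact: cx1.
  by apply: cvgM; [exact: cvg_cst | exact: cx2].
have dE (u : R) : 0 < u -> is_derive u 1 E (x2 u * (1 - x u `^ p)).
  move=> u0; have := dx1 u u0 => ?; have := dx2 u u0 => ?.
  rewrite /E; apply: is_derive_eq; rewrite ?scaler1 /GRing.scale /=.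
  by field; rewrite gt_eqF.
apply: (halfline_derive_le0_ge cE dE _ _ s0 st) => u.
rewrite in_itv /= => /andP[su _]; have xu_ge1 : 1 <= x u by apply: x_ge1; lra.
have u0 : 0 <= u by lra.
rewrite pmulr_rle0 ?x2_gt0 // subr_le0.
exact: le_trans xu_ge1 (le1r_powR xu_ge1 hp).
Qed.

Let cx2_ge0 t : 0 <= t -> 0 <= c^-1 * x2 t.
Proof. by move=> t0; rewrite mulr_ge0 ?invr_ge0 ?ltW ?x2_gt0. Qed.

Lemma x1_le_E t : 0 <= t -> x1 t <= E T.
Proof.
move=> t0; have [tT|Tt] := leP t T.
  by rewrite /E ler_wpDr ?cx2_ge0 ?x1_le.
by apply: le_trans (E_le _ _ (lexx T) (ltW Tt)); rewrite /E ler_wpDr ?cx2_ge0.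
Qed.

Lemma x1_cvg : exists h : R, x1 t @[t --> +oo] --> h.
Proof. exact: nondecreasing_bounded_cvg x1_le x1_le_E. Qed.

Section Limit.
Context {h : R}.
Hypothesis x1h : x1 t @[t --> +oo] --> h.

Lemma x1_lt_h t : 0 <= t -> x1 t < h.
Proof.
move=> t0; have t1_ge0 : 0 <= t + 1 by lra.
have := nondecreasing_cvg_le x1_le x1h _ t1_ge0.
by apply: lt_le_trans; apply: x1_lt; rewrite ?ltrDl.
Qed.

Lemma h_gt0 : 0 < h.
Proof. by rewrite -x10 x1_lt_h. Qed.

Lemma h_le_E t : T <= t -> h <= E t.
Proof.
move=> Tt; apply: (cvgr_to_le x1h); exists t; split; first exact: num_real.
move=> s ts; apply: le_trans (E_le _ _ Tt (ltW ts)).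
rewrite /E ler_wpDr ?cx2_ge0 //.
by apply: le_trans (ltW ts); exact: le_trans Tt.
Qed.

Let g s := h * s - x s.

Let cg : {within `[0, +oo[, continuous g}.
Proof.
have lin : continuous (fun s : R => h * s).
  by move=> s; apply: cvgM; [exact: cvg_cst | exact: cvg_id].
move=> u; apply: cvgB; last exact: cx.
exact: (continuous_subspaceT lin).
Qed.

Let dg (u : R) : 0 < u -> is_derive u 1 g (h - x1 u).
Proof.
move=> u0; have := dx u u0 => ?.
by rewrite /g; apply: is_derive_eq; rewrite ?scaler1 /GRing.scale /=; ring.
Qed.

Lemma g_lt s t : 0 <= s -> s < t -> g s < g t.
Proof.
move=> s0 st; apply: (halfline_derive_gt0_lt cg dg _ _ s0 st) => u.
by rewrite in_itv /= subr_gt0 => /andP[su _]; apply: x1_lt_h; lra.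
Qed.

Lemma g_le s t : 0 <= s -> s <= t -> g s <= g t.
Proof.
move=> s0 st; apply: (halfline_derive_ge0_le cg dg _ _ s0 st) => u.
by rewrite in_itv /= subr_ge0 => /andP[su _]; apply/ltW/x1_lt_h; lra.
Qed.

Lemma g_le_bound t : 0 <= t -> g t <= g T + c^-1 * h.
Proof.
move=> t0.
have ch_ge0 : 0 <= c^-1 * h by rewrite mulr_ge0 ?invr_ge0 ?ltW ?h_gt0.
have [tT|Tt] := leP t T; first by rewrite ler_wpDr ?g_le.
pose G u := g u - c^-1 * x1 u.
have cG : {within `[0, +oo[, continuous G}.
  move=> u; apply: cvgB; first exact: cg.
  by apply: cvgM; [exact: cvg_cst | exact: cx1].
have dG (u : R) : 0 < u -> is_derive u 1 G (h - E u).
  move=> u0; have := dg u u0 => ?; have := dx1 u u0 => ?.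
  by rewrite /G /E; apply: is_derive_eq; rewrite ?scaler1 /GRing.scale /=; ring.
have GtT : G t <= G T.
  apply: (halfline_derive_le0_ge cG dG _ _ T_ge0 (ltW Tt)) => u.
  by rewrite in_itv /= subr_le0 => /andP[Tu _]; apply: h_le_E; exact: ltW.
have x1T_ge0 : 0 <= c^-1 * x1 T.
  by rewrite mulr_ge0 ?invr_ge0 ?ltW // x1_gt0 // (lt_trans ltr01 T_gt1).
have : c^-1 * x1 t <= c^-1 * h by rewrite ler_wpM2l ?invr_ge0 ?ltW ?x1_lt_h.
rewrite /G in GtT; lra.
Qed.

Lemma g_cvg : exists mu : R, g t @[t --> +oo] --> mu.
Proof. exact: nondecreasing_bounded_cvg g_le g_le_bound. Qed.

Lemma slant_asymptote :
  exists2 mu : R, 0 < mu & g t @[t --> +oo] --> mu /\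
    forall t, 0 <= t -> Num.max 0 (h * t - mu) <= x t <= h * t.
Proof.
have [mu gmu] := g_cvg; have g_le_mu := nondecreasing_cvg_le g_le gmu.
have g0 : g 0 = 0 by rewrite /g x0 mulr0 subrr.
exists mu; first by apply: lt_le_trans (g_le_mu _ ler01); rewrite -g0 g_lt.
split=> // t t0; have := g_le_mu t t0; have := g_le _ _ (lexx 0) t0.
by rewrite g0 /g ge_max x_ge0 //=; lra.
Qed.

End Limit.

Lemma x1_limit : exists2 h : R, 0 < h & x1 t @[t --> +oo] --> h.
Proof. by have [h x1h] := x1_cvg; exists h => //; exact: h_gt0 x1h. Qed.

End Solution.

Theorem lemma3 (R : realType) (p c a : R) (x x1 x2 : R -> R)
  (hp : 1 <= p) (hc : 0 < c) (ha : 0 < a)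
  (dx : forall t : R, 0 < t -> is_derive t 1 x (x1 t))
  (dx1 : forall t : R, 0 < t -> is_derive t 1 x1 (x2 t))
  (dx2 : forall t : R, 0 < t -> is_derive t 1 x2 (- c * (x t `^ p) * x2 t))
  (cx : {within `[0, +oo[, continuous x})
  (cx1 : {within `[0, +oo[, continuous x1})
  (cx2 : {within `[0, +oo[, continuous x2})
  (x0 : x 0 = 0) (x10 : x1 0 = 0) (x20 : x2 0 = a) :
  exists h mu : R,
    [/\ 0 < h, (x1 : R -> R) t @[t --> +oo] --> h,
        0 < mu, ((fun s : R => h * s - x s) t) @[t --> +oo] --> mu &
        forall t : R, 0 <= t -> Num.max 0 (h * t - mu) <= x t <= h * t].
Proof.
have [h h_gt0 x1h] := x1_limit hp hc ha dx dx1 dx2 cx cx1 cx2 x0 x10 x20.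
have [mu mu_gt0 [gmu x_bounds]] :=
  slant_asymptote hp hc ha dx dx1 dx2 cx cx1 cx2 x0 x10 x20 x1h.
by exists h, mu.
Qed.
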